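(* Let $M$ be a monoid, $\phi:M\to M$ an endomorphism, and $z\in M$ such that the elements $z\phi^n$ ($n\in\mathbb{N}\cup\{0\}$) are pairwise distinct. Let $\beta,\beta',\delta,\delta'\in\mathbb{N}\cup\{0\}$. Then there exist $\alpha,\alpha',\gamma,\gamma'\in\mathbb{N}\cup\{0\}$ such that $c^\gamma b^\beta z c^\delta b^\alpha = c^{\gamma'} b^{\beta'} z c^{\delta'} b^{\alpha'}$ in $\mathrm{BR}(M,\phi)$ if and only if $\max\{\beta,\delta\}=\max\{\beta',\delta'\}$.
   Context: If $M$ has monoid presentation $\langle A\mid \mathcal{R}\rangle$ ($A$ possibly infinite) and $\phi$ is an endomorphism of $M$ (maps written on the right), the Bruck--Reilly extension $\mathrm{BR}(M,\phi)$ is the monoid presented by $\langle A,b,c\mid \mathcal{R},\ bc=1,\ ba=(a\phi)b,\ ac=c(a\phi)\ (a\in A)\rangle$ (with $a\phi$ written as a word over $A$); it does not depend on the choice of presentation, and $M$ embeds in it. *)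

From Stdlib Require Import List Arith.
Import ListNotations.

Section BR.
Variables (T : Type) (mul : T -> T -> T) (one : T) (phi : T -> T).

Definition is_monoid : Prop :=
  (forall x y w, mul x (mul y w) = mul (mul x y) w) /\
  (forall x, mul one x = x) /\ (forall x, mul x one = x).

Definition is_monoid_endo : Prop :=
  (forall x y, phi (mul x y) = mul (phi x) (phi y)) /\ phi one = one.

(* Generators of BR(M,phi) w.r.t. the presentation <A | R> of M with A = M
   and R the multiplication table:  letters a (a in M), b, c. *)
Inductive br_letter : Type :=
| Lm : T -> br_letter
| Lb : br_letter
| Lc : br_letter.

Inductive br_rel : list br_letter -> list br_letter -> Prop :=
| rel_mul : forall x y, br_rel [Lm x; Lm y] [Lm (mul x y)]
| rel_one : br_rel [Lm one] []
| rel_bc : br_rel [Lb; Lc] []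
| rel_ba : forall a, br_rel [Lb; Lm a] [Lm (phi a); Lb]
| rel_ac : forall a, br_rel [Lm a; Lc] [Lc; Lm (phi a)].

(* The congruence on the free monoid generated by the relations;
   equality in BR(M,phi) of the elements represented by two words. *)
Inductive br_eq : list br_letter -> list br_letter -> Prop :=
| br_step : forall u v l r, br_rel l r -> br_eq (u ++ l ++ v) (u ++ r ++ v)
| br_refl : forall w, br_eq w w
| br_sym : forall w1 w2, br_eq w1 w2 -> br_eq w2 w1
| br_trans : forall w1 w2 w3, br_eq w1 w2 -> br_eq w2 w3 -> br_eq w1 w3.

Definition br_word (z : T) (g be d a : nat) : list br_letter :=
  repeat Lc g ++ repeat Lb be ++ [Lm z] ++ repeat Lc d ++ repeat Lb a.

End BR.

Arguments Lm {T}. Arguments Lb {T}. Arguments Lc {T}.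

(* The relations of BR(M, phi) rewrite every word to a normal form c^i m b^j
   (m in M), and this normal form is computed by an action of the letters on
   triples (i, m, j), so the middle component m is an invariant of equality in
   BR(M, phi).  For the word c^g b^beta z c^delta b^a that component is
   z phi^(max beta delta); since the z phi^n are pairwise distinct, equal
   words have equal maxima.  Conversely, choosing g = beta and a = delta, the
   relations turn c^beta b^beta z c^delta b^delta into
   c^n (z phi^n) b^n with n = max beta delta. *)

From Stdlib Require Import List Arith Lia Setoid Morphisms.
Import ListNotations.

Lemma iter_succ_r {A} (f : A -> A) (k : nat) (a : A) :
  Nat.iter k f (f a) = f (Nat.iter k f a).
Proof. induction k as [|k IH]; simpl; congruence. Qed.

Section BruckReilly.
Variables (T : Type) (mul : T -> T -> T) (one : T) (phi : T -> T).

Local Notation br_eq := (br_eq T mul one phi).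
Local Notation m := (@Lm T).
Local Notation b := (@Lb T).
Local Notation c := (@Lc T).

Lemma iter_endo_mul (Hphi : is_monoid_endo T mul one phi) (n : nat) (x y : T) :
  Nat.iter n phi (mul x y) = mul (Nat.iter n phi x) (Nat.iter n phi y).
Proof.
  destruct Hphi as [Hmul _]; induction n as [|n IH]; simpl; congruence.
Qed.

Lemma iter_endo_one (Hphi : is_monoid_endo T mul one phi) (n : nat) :
  Nat.iter n phi one = one.
Proof.
  destruct Hphi as [_ Hone]; induction n as [|n IH]; simpl; congruence.
Qed.

(* [br_act x (i, a, j)] is the normal form of x c^i a b^j. *)
Definition br_act (x : br_letter T) (s : nat * T * nat) : nat * T * nat :=
  let '(i, a, j) := s in
  match x with
  | Lc => (S i, a, j)
  | Lb => match i with 0 => (0, phi a, S j) | S i' => (i', a, j) end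
  | Lm x => (i, mul (Nat.iter i phi x) a, j)
  end.

Definition br_eval (w : list (br_letter T)) : nat * T * nat :=
  fold_right br_act (0, one, 0) w.

Lemma br_act_rel (HM : is_monoid T mul one) (Hphi : is_monoid_endo T mul one phi)
  (l r : list (br_letter T)) (s : nat * T * nat) :
  br_rel T mul one phi l r -> fold_right br_act s l = fold_right br_act s r.
Proof.
  destruct HM as [Hassoc [Hone_l _]]; destruct s as [[i a] j].
  intros [x y| | |x|x]; simpl.
  - now rewrite iter_endo_mul, Hassoc.
  - now rewrite iter_endo_one, Hone_l.
  - reflexivity.
  - destruct i as [|i]; simpl.
    + now rewrite (proj1 Hphi).
    + now rewrite iter_succ_r.
  - now rewrite iter_succ_r.
Qed.

Lemma br_eval_eq (HM : is_monoid T mul one) (Hphi : is_monoid_endo T mul one phi)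
  (w1 w2 : list (br_letter T)) :
  br_eq w1 w2 -> br_eval w1 = br_eval w2.
Proof.
  unfold br_eval; induction 1 as [u v l r Hlr| | |]; try congruence.
  rewrite !fold_right_app; f_equal; now apply br_act_rel.
Qed.

Lemma fold_br_act_c_pow (k i j : nat) (a : T) :
  fold_right br_act (i, a, j) (repeat c k) = (k + i, a, j).
Proof. induction k as [|k IH]; simpl; now rewrite ?IH. Qed.

Lemma fold_br_act_b_pow (k i j : nat) (a : T) :
  fold_right br_act (i, a, j) (repeat b k)
  = (i - k, Nat.iter (k - i) phi a, j + (k - i)).
Proof.
  induction k as [|k IH]; cbn [repeat fold_right].
  - now rewrite Nat.sub_0_r, Nat.add_0_r.
  - rewrite IH; destruct (i - k) as [|n] eqn:E; cbn [br_act].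
    + replace (S k - i) with (S (k - i)) by lia.
      do 2 f_equal; lia.
    + replace (S k - i) with 0 by lia; replace (k - i) with 0 by lia.
      do 2 f_equal; lia.
Qed.

Lemma br_eval_word_middle (HM : is_monoid T mul one)
  (Hphi : is_monoid_endo T mul one phi) (z : T) (g be d a : nat) :
  exists i j, br_eval (br_word T z g be d a) = (i, Nat.iter (Nat.max be d) phi z, j).
Proof.
  destruct HM as [_ [_ Hone_r]].
  unfold br_eval, br_word; rewrite !fold_right_app.
  rewrite fold_br_act_b_pow, iter_endo_one, fold_br_act_c_pow by exact Hphi.
  simpl; rewrite Hone_r, fold_br_act_b_pow, fold_br_act_c_pow, <- Nat.iter_add.
  replace (be - (d + 0) + (d + 0)) with (Nat.max be d) by lia; eauto.
Qed.

#[local] Instance br_eq_equivalence : Equivalence br_eq.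
Proof.
  split; [exact (br_refl _ _ _ _)|exact (br_sym _ _ _ _)|exact (br_trans _ _ _ _)].
Qed.

Lemma br_eq_context (p q u v : list (br_letter T)) :
  br_eq u v -> br_eq (p ++ u ++ q) (p ++ v ++ q).
Proof.
  induction 1 as [u v l r Hlr| | |]; try (now econstructor; eauto).
  rewrite !app_assoc, <- !(app_assoc (p ++ u)), <- !(app_assoc _ _ q).
  now constructor.
Qed.

#[local] Instance app_br_eq_proper : Proper (br_eq ==> br_eq ==> br_eq) (@app _).
Proof.
  intros u u' Hu v v' Hv; transitivity (u' ++ v).
  - rewrite <- (app_nil_l (u ++ v)), <- (app_nil_l (u' ++ v)).
    apply br_eq_context; exact Hu.
  - rewrite <- (app_nil_r v), <- (app_nil_r v'); apply br_eq_context; exact Hv.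
Qed.

#[local] Instance cons_br_eq_proper : Proper (eq ==> br_eq ==> br_eq) (@cons _).
Proof. intros x _ <- v v' Hv; exact (app_br_eq_proper [x] [x] ltac:(reflexivity) v v' Hv). Qed.

Lemma br_rel_eq (l r w : list (br_letter T)) :
  br_rel T mul one phi l r -> br_eq (l ++ w) (r ++ w).
Proof. intros H; exact (br_step _ _ _ _ [] w l r H). Qed.

Lemma br_eq_b_pow_m (k : nat) (a : T) (w : list (br_letter T)) :
  br_eq (repeat b k ++ m a :: w) (m (Nat.iter k phi a) :: repeat b k ++ w).
Proof.
  induction k as [|k IH]; simpl; [reflexivity|].
  rewrite IH; exact (br_rel_eq [b; m _] [m _; b] _ (rel_ba _ _ _ _ _)).
Qed.

Lemma br_eq_m_c_pow (k : nat) (a : T) (w : list (br_letter T)) :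
  br_eq (m a :: repeat c k ++ w) (repeat c k ++ m (Nat.iter k phi a) :: w).
Proof.
  revert a; induction k as [|k IH]; intros a; simpl; [reflexivity|].
  transitivity (c :: m (phi a) :: repeat c k ++ w).
  - exact (br_rel_eq [m a; c] [c; m (phi a)] _ (rel_ac _ _ _ _ _)).
  - now rewrite IH, iter_succ_r.
Qed.

Lemma br_eq_b_pow_c_pow (k : nat) (w : list (br_letter T)) :
  br_eq (repeat b k ++ repeat c k ++ w) w.
Proof.
  induction k as [|k IH]; [reflexivity|].
  rewrite <- IH at 2.
  replace (S k) with (k + 1) at 1 by lia; rewrite repeat_app, <- app_assoc.
  apply app_br_eq_proper; [reflexivity|].
  exact (br_rel_eq [b; c] [] _ (rel_bc _ _ _ _)).
Qed.

Lemma br_word_normal_form (z : T) (be d : nat) :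
  let n := Nat.max be d in
  br_eq (br_word T z be be d d) (repeat c n ++ m (Nat.iter n phi z) :: repeat b n).
Proof.
  unfold br_word; simpl; rewrite br_eq_b_pow_m.
  destruct (Nat.le_ge_cases d be) as [Hdb|Hbd].
  - replace (Nat.max be d) with be by lia.
    replace be with ((be - d) + d) at 3 by lia.
    now rewrite repeat_app, <- app_assoc, br_eq_b_pow_c_pow, <- repeat_app,
      Nat.sub_add.
  - replace (Nat.max be d) with d by lia.
    replace d with (be + (d - be)) at 1 by lia.
    rewrite repeat_app, <- app_assoc, br_eq_b_pow_c_pow, br_eq_m_c_pow, app_assoc, <- repeat_app,
      <- Nat.iter_add.
    now replace (d - be + be) with d by lia; replace (be + (d - be)) with d by lia.
Qed.

End BruckReilly.

Theorem mainTheorem14 (T : Type) (mul : T -> T -> T) (one : T) (phi : T -> T)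
  (HM : is_monoid T mul one) (Hphi : is_monoid_endo T mul one phi)
  (z : T) (Hz : forall m n : nat, Nat.iter m phi z = Nat.iter n phi z -> m = n)
  (beta beta' delta delta' : nat) :
  (exists alpha alpha' gamma gamma' : nat,
     br_eq T mul one phi (br_word T z gamma beta delta alpha)
                       (br_word T z gamma' beta' delta' alpha'))
  <-> Nat.max beta delta = Nat.max beta' delta'.
Proof.
  split.
  - intros (a & a' & g & g' & Heq).
    apply (br_eval_eq T mul one phi HM Hphi) in Heq.
    destruct (br_eval_word_middle T mul one phi HM Hphi z g beta delta a) as (i & j & E).
    destruct (br_eval_word_middle T mul one phi HM Hphi z g' beta' delta' a')
      as (i' & j' & E').
    rewrite E, E' in Heq; injection Heq as _ Hmax _.
    exact (Hz _ _ Hmax).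
  - intros Hmax; exists delta, delta', beta, beta'.
    eapply br_trans; [apply br_word_normal_form|].
    rewrite Hmax; apply br_sym, br_word_normal_form.
Qed.
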